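(* If $X$ is an infinite set, then the preorder $\mathbf{U}(X)$ has no Heyting negation: there exists $\beta\in\mathbf{U}(X)$ such that for every $\alpha\in\mathbf{U}(X)$ there is $\gamma\in\mathbf{U}(X)$ for which the equivalence $\gamma\wedge\beta\sqsubseteq\bot\iff\gamma\sqsubseteq\alpha$ fails. Consequently $\mathbf{U}(X)$ also has no Heyting implication.
   Context: For functions $\alpha,\beta:X\to[0,1]$ on a set $X$, write $\alpha\sqsubseteq\beta$ if for every $\varepsilon>0$ there exists $\delta>0$ such that for all $x\in X$, $\alpha(x)\le\delta$ implies $\beta(x)\le\varepsilon$. $\mathbf{U}(X)$ is the preorder of all functions $X\to[0,1]$ ordered by $\sqsubseteq$. In it the meet $\gamma\wedge\beta$ is the pointwise maximum, the top is the constant $0$ function, and $\bot$ denotes the bottom element (e.g. the constant function $1$; any function with positive infimum is isomorphic to it). *)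

From Stdlib Require Import Reals List.
Open Scope R_scope.

Definition infinite_type (X : Type) : Prop :=
  ~ (exists l : list X, forall x : X, In x l).

Definition inU {X : Type} (f : X -> R) : Prop := forall x, 0 <= f x <= 1.

Definition sqle {X : Type} (a b : X -> R) : Prop :=
  forall eps, 0 < eps -> exists delta, 0 < delta /\
    forall x, a x <= delta -> b x <= eps.

Definition umeet {X : Type} (g b : X -> R) : X -> R := fun x => Rmax (g x) (b x).

Definition ubot {X : Type} : X -> R := fun _ => 1.

From Stdlib Require Import Reals Lra Lia List Classical ClassicalEpsilon.
Open Scope R_scope.

(* Call beta : X -> (0,1] "null" if it is strictly positive but
   has infimum 0.  For a null beta no alpha is a pseudocomplement of beta:
   - if alpha vanishes everywhere, gamma := beta satisfies gamma ⊑ alpha,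
     but gamma ∧ beta = beta is not bounded away from 0, so it is not ⊑ ⊥;
   - if alpha x0 > 0, the function gamma that is 0 at x0 and 1 elsewhere
     satisfies gamma ∧ beta >= beta x0 > 0, hence gamma ∧ beta ⊑ ⊥, but
     gamma ⊑ alpha fails at the point x0.
   A null function exists on every infinite X: enumerate pairwise distinct
   points x_0, x_1, ... (each new one avoiding the finite list of previous
   ones) and put beta (x_n) = 1/(n+1), beta = 1 elsewhere.
   Finally, a Heyting implication beta => ⊥ would be a pseudocomplement of
   beta, so no Heyting implication exists either. *)

Section Enumeration.

Variable X : Type.
Hypothesis HX : infinite_type X.

Lemma fresh_exists (l : list X) : exists x, ~ In x l.
Proof.
  apply NNPP; intros Hnone; apply HX; exists l; intros x.
  apply NNPP; intros Hx; apply Hnone; now exists x.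
Qed.

Definition fresh (l : list X) : X :=
  proj1_sig (constructive_indefinite_description _ (fresh_exists l)).

Lemma fresh_notin (l : list X) : ~ In (fresh l) l.
Proof. exact (proj2_sig (constructive_indefinite_description _ (fresh_exists l))). Qed.

Fixpoint prefix (n : nat) : list X :=
  match n with
  | O => nil
  | S n => fresh (prefix n) :: prefix n
  end.

Definition enum (n : nat) : X := fresh (prefix n).

Lemma enum_in_prefix m n : (m < n)%nat -> In (enum m) (prefix n).
Proof.
  induction n as [|n IH]; intros Hmn; [lia|]; simpl.
  destruct (Nat.eq_dec m n) as [->|Hne]; [now left|].
  right; apply IH; lia.
Qed.

Lemma enum_injective m n : enum m = enum n -> m = n.
Proof.
  intros E; destruct (Nat.lt_trichotomy m n) as [Hlt|[Heq|Hgt]]; auto; exfalso.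
  - apply (fresh_notin (prefix n)); fold (enum n); rewrite <- E.
    now apply enum_in_prefix.
  - apply (fresh_notin (prefix m)); fold (enum m); rewrite E.
    now apply enum_in_prefix.
Qed.

Lemma inv_succ_bounds n : 0 < / INR (S n) <= 1.
Proof.
  pose proof (pos_INR n); rewrite S_INR; split.
  - apply Rinv_0_lt_compat; lra.
  - rewrite <- Rinv_1; apply Rinv_le_contravar; lra.
Qed.

Definition null_fun (x : X) : R :=
  match excluded_middle_informative (exists n, x = enum n) with
  | left H => / INR (S (proj1_sig (constructive_indefinite_description _ H)))
  | right _ => 1
  end.

Lemma null_fun_bounds x : 0 < null_fun x <= 1.
Proof.
  unfold null_fun; destruct (excluded_middle_informative _) as [H|_]; [|lra].
  apply inv_succ_bounds.
Qed.

Lemma null_fun_enum n : null_fun (enum n) = / INR (S n).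
Proof.
  unfold null_fun; destruct (excluded_middle_informative _) as [H|H].
  - destruct (constructive_indefinite_description _ H) as [m Hm]; simpl.
    now rewrite (enum_injective _ _ Hm).
  - exfalso; apply H; now exists n.
Qed.

Lemma null_function_exists :
  exists beta : X -> R, (forall x, 0 < beta x <= 1) /\
    (forall d, 0 < d -> exists x, beta x <= d).
Proof.
  exists null_fun; split; [exact null_fun_bounds|].
  intros d Hd; destruct (archimed_cor1 d Hd) as [N [HN HN0]].
  exists (enum N); rewrite null_fun_enum; apply Rlt_le.
  eapply Rle_lt_trans; [|exact HN].
  apply Rinv_le_contravar; [apply lt_0_INR; lia | rewrite S_INR; lra].
Qed.

End Enumeration.

Lemma sqle_ubot_iff {X : Type} (f : X -> R) :
  sqle f ubot <-> exists c, 0 < c /\ forall x, c <= f x.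
Proof.
  split.
  - intros H; destruct (H (1/2) ltac:(lra)) as [d [Hd Hx]].
    exists d; split; [exact Hd|]; intros x.
    destruct (Rle_lt_dec (f x) d) as [Hle|Hlt]; [|lra].
    specialize (Hx x Hle); unfold ubot in Hx; lra.
  - intros [c [Hc Hf]] eps Heps; exists (c/2); split; [lra|].
    intros x Hx; specialize (Hf x); lra.
Qed.

Lemma sqle_nonpos {X : Type} (g a : X -> R) : (forall x, a x <= 0) -> sqle g a.
Proof. intros Ha eps Heps; exists 1; split; [lra|]; intros x _; specialize (Ha x); lra. Qed.

Lemma not_sqle_at {X : Type} (g a : X -> R) x0 :
  g x0 <= 0 -> 0 < a x0 -> ~ sqle g a.
Proof.
  intros Hg Ha H; destruct (H (a x0 / 2) ltac:(lra)) as [d [Hd Hx]].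
  specialize (Hx x0 ltac:(lra)); lra.
Qed.

Definition hole {X : Type} (x0 : X) (x : X) : R :=
  if excluded_middle_informative (x = x0) then 0 else 1.

Lemma hole_inU {X : Type} (x0 : X) : inU (hole x0).
Proof. intros x; unfold hole; destruct (excluded_middle_informative _); lra. Qed.

Lemma no_pseudocomplement {X : Type} (beta : X -> R) :
  (forall x, 0 < beta x <= 1) -> (forall d, 0 < d -> exists x, beta x <= d) ->
  forall alpha : X -> R, inU alpha ->
    exists gamma : X -> R, inU gamma /\
      ~ (sqle (umeet gamma beta) ubot <-> sqle gamma alpha).
Proof.
  intros Hpos Hnull alpha Halpha.
  destruct (classic (exists x0, 0 < alpha x0)) as [[x0 Hx0]|Hzero].
  - exists (hole x0); split; [apply hole_inU|]; intros [Hneg _].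
    assert (Hmeet : sqle (umeet (hole x0) beta) ubot).
    { apply sqle_ubot_iff; exists (beta x0); split; [apply Hpos|].
      intros x; unfold umeet, hole.
      destruct (excluded_middle_informative (x = x0)) as [->|_]; [apply Rmax_r|].
      pose proof (Hpos x0); pose proof (Rmax_l 1 (beta x)); lra. }
    apply (not_sqle_at (hole x0) alpha x0); [|exact Hx0|exact (Hneg Hmeet)].
    unfold hole; destruct (excluded_middle_informative (x0 = x0)); [lra|easy].
  - exists beta; split; [intros x; specialize (Hpos x); lra|]; intros [_ Hneg].
    assert (Hbelow : sqle beta alpha).
    { apply sqle_nonpos; intros x; apply Rnot_lt_le; intros Hx; apply Hzero; eauto. }
    destruct (proj1 (sqle_ubot_iff _) (Hneg Hbelow)) as [c [Hc Hbound]].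
    destruct (Hnull (c/2) ltac:(lra)) as [x Hx]; specialize (Hbound x).
    unfold umeet in Hbound; rewrite Rmax_left in Hbound by lra; lra.
Qed.

Theorem mainTheorem4 (X : Type) (HX : infinite_type X) :
  (* no Heyting negation *)
  (exists beta : X -> R, inU beta /\
     forall alpha : X -> R, inU alpha ->
       exists gamma : X -> R, inU gamma /\
         ~ (sqle (umeet gamma beta) ubot <-> sqle gamma alpha))
  /\
  (* consequently, no Heyting implication *)
  ~ (forall beta alpha : X -> R, inU beta -> inU alpha ->
       exists imp : X -> R, inU imp /\
         forall gamma : X -> R, inU gamma ->
           (sqle (umeet gamma beta) alpha <-> sqle gamma imp)).
Proof.
  destruct (null_function_exists X HX) as [beta [Hpos Hnull]].
  assert (Hbeta : inU beta) by (intros x; specialize (Hpos x); lra).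
  pose proof (no_pseudocomplement beta Hpos Hnull) as Hnoneg.
  split; [now exists beta|].
  (* The implication beta => ⊥ would be a pseudocomplement of beta. *)
  intros Himp.
  assert (Hbot : inU (@ubot X)) by (intros x; unfold ubot; lra).
  destruct (Himp beta ubot Hbeta Hbot) as [neg [Hneg Hspec]].
  destruct (Hnoneg neg Hneg) as [gamma [Hgamma Hfail]].
  exact (Hfail (Hspec gamma Hgamma)).
Qed.
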